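(* Let $n\ge 1$ and let $M$ be an $R[n]$-module. Then $M$ is isomorphic, as an $R[n]$-module, to a neural ring $R_\mathcal C$ for some code $\mathcal C\subseteq\{0,1\}^n$ if and only if $M$ has an $\mathbb F_2$-basis $\rho_1,\dots,\rho_d$ such that: (1) for all $i\in[n]$ and $j\in[d]$, $x_i\cdot\rho_j\in\{\rho_j,0\}$; (2) for all distinct $j,k\in[d]$ there exists at least one $i\in[n]$ such that exactly one of $x_i\cdot\rho_j$ and $x_i\cdot\rho_k$ is $0$.
   Context: A neural code on $n$ neurons is a subset $\mathcal C\subseteq\{0,1\}^n$. Its ideal is $I_\mathcal C=\{f\in\mathbb F_2[x_1,\dots,x_n]: f(c)=0 \text{ for all } c\in\mathcal C\}$ and its neural ring is $R_\mathcal C=\mathbb F_2[x_1,\dots,x_n]/I_\mathcal C$, identified with the ring of all functions $\mathcal C\to\{0,1\}=\mathbb F_2$. Write $R[n]=\mathbb F_2[x_1,\dots,x_n]/\langle x_i^2-x_i : i\in[n]\rangle$, the neural ring of the full code $\{0,1\}^n$. For $\mathcal C\subseteq\{0,1\}^n$, $R_\mathcal C$ is an $R[n]$-module via $(r\cdot f)(c)=r(c)f(c)$ for $c\in\mathcal C$. *)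

From HB Require Import structures.
From mathcomp Require Import all_boot all_algebra.
Set Implicit Arguments. Unset Strict Implicit. Unset Printing Implicit Defensive.
Import GRing.Theory.
Local Open Scope ring_scope.

Definition cube (n : nat) : finType := {ffun 'I_n -> bool}.

(* R[n] = F_2[x_1..x_n]/<x_i^2 - x_i>, identified (as in the paper) with the
   neural ring of the full code {0,1}^n, i.e. the ring of all functions
   {0,1}^n -> F_2 under pointwise operations. *)
Definition Rn (n : nat) : pzRingType := {ffun cube n -> 'F_2}.

(* The class of the variable x_i in R[n]: the coordinate function c |-> c_i. *)
Definition xvar (n : nat) (i : 'I_n) : Rn n := [ffun c : cube n => (c i)%:R].

Definition cst (n : nat) (a : 'F_2) : Rn n := [ffun _ : cube n => a].

(* The neural ring R_C of a code C ⊆ {0,1}^n: all functions C -> F_2. *)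
Definition neural_ring (n : nat) (C : {set cube n}) :=
  {ffun {c : cube n | c \in C} -> 'F_2}.

Definition nr_act (n : nat) (C : {set cube n}) (r : Rn n)
  (f : neural_ring C) : neural_ring C := [ffun c => r (val c) * f c].

Definition iso_to_neural_ring (n : nat) (M : lmodType (Rn n))
  (C : {set cube n}) : Prop :=
  exists phi : M -> neural_ring C,
    [/\ bijective phi,
        (forall u v : M, phi (u + v) = phi u + phi v) &
        (forall (r : Rn n) (u : M), phi (r *: u) = nr_act r (phi u))].

(* rho : 'I_d -> M is an F_2-basis of M (F_2 acting through the constants
   of R[n]): every element of M is uniquely an F_2-linear combination. *)
Definition F2_basis (n : nat) (M : lmodType (Rn n)) (d : nat)
  (rho : 'I_d -> M) : Prop :=
  forall m : M, exists! a : {ffun 'I_d -> 'F_2},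
    m = \sum_(j < d) cst n (a j) *: rho j.

From HB Require Import structures.
From mathcomp Require Import all_boot all_algebra.
Set Implicit Arguments.
Unset Strict Implicit.
Unset Printing Implicit Defensive.
Import GRing.Theory.
Local Open Scope ring_scope.

(** Both directions rest on one observation: a vector of an [R[n]]-module on
    which every [x_i] acts as a scalar [c_i] in [F_2] is an eigenvector of the
    whole ring, [r] acting by the scalar [r(c)], because [R[n]] is spanned by
    the indicators [delta c = prod_i (x_i or 1 - x_i)] of the points of the
    cube.  Hence an [F_2]-basis as in (1) assigns a codeword [c_j] to each
    basis vector, (2) says the [c_j] are distinct, and sending [rho_j] to the
    indicator of [c_j] identifies [M] with [R_C] for [C = {c_j}].  Conversely
    the indicators of the codewords of [C] form such a basis of [R_C]. *)

Lemma RnM n (r s : Rn n) c : (r * s) c = r c * s c.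
Proof. by rewrite /GRing.mul /= ffunE. Qed.

Lemma Rn_prodE n (I : finType) (F : I -> Rn n) c :
  (\prod_i F i) c = \prod_i F i c.
Proof.
apply: (big_rec2 (fun (x : Rn n) y => x c = y)); first by rewrite ffunE.
by move=> i x y _ <-; rewrite RnM.
Qed.

Lemma xvarE n (i : 'I_n) c : xvar i c = (c i)%:R.
Proof. by rewrite ffunE. Qed.

Lemma cst0 n : cst n 0 = 0.
Proof. by apply/ffunP => c; rewrite !ffunE. Qed.

Lemma cst1 n : cst n 1 = 1.
Proof. by apply/ffunP => c; rewrite !ffunE. Qed.

Lemma cstD n a b : cst n (a + b) = cst n a + cst n b.
Proof. by apply/ffunP => c; rewrite !ffunE. Qed.

Lemma cstN n a : cst n (- a) = - cst n a.
Proof. by apply/ffunP => c; rewrite !ffunE. Qed.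

Lemma cstM n a b : cst n (a * b) = cst n a * cst n b.
Proof. by apply/ffunP => c; rewrite RnM !ffunE. Qed.

Lemma cst_comm n (r : Rn n) a : r * cst n a = cst n a * r.
Proof. by apply/ffunP => c; rewrite !RnM mulrC. Qed.

Lemma scale_cstA n (M : lmodType (Rn n)) a b (v : M) :
  cst n a *: (cst n b *: v) = cst n (a * b) *: v.
Proof. by rewrite scalerA cstM. Qed.

Lemma scale_cstC n (M : lmodType (Rn n)) r a (v : M) :
  r *: (cst n a *: v) = cst n a *: (r *: v).
Proof. by rewrite !scalerA cst_comm. Qed.

Definition delta {n} (c : cube n) : Rn n :=
  \prod_(i < n) (if c i then xvar i else 1 - xvar i).

Lemma cube_neqP n (c c' : cube n) : reflect (exists i, c i != c' i) (c != c').
Proof.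
apply: (iffP idP) => [ne_cc'|[i]]; last by apply: contraNneq => ->.
apply/existsP; apply: contraNT ne_cc' => /existsPn same.
by apply/eqP/ffunP => i; apply/eqP/negbNE/same.
Qed.

Lemma deltaE n (c c' : cube n) : delta c c' = (c == c')%:R.
Proof.
have factorE i : (if c i then xvar i else 1 - xvar i) c' = (c i == c' i)%:R.
  by case: (c i); rewrite !ffunE; case: (c' i); rewrite /= ?subrr ?subr0.
rewrite /delta Rn_prodE; under eq_bigr do rewrite factorE.
have [->|/cube_neqP [i ne_i]] := eqVneq c c'.
  by rewrite big1 // => i _; rewrite eqxx.
by rewrite (bigD1 i) //= (negbTE ne_i) mul0r.
Qed.

Lemma Rn_delta_expansion n (r : Rn n) :
  r = \sum_(c : cube n) cst n (r c) * delta c.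
Proof.
apply/ffunP => c'; rewrite sum_ffunE (bigD1 c') //= big1 => [|c /negbTE ne_c].
  by rewrite addr0 RnM deltaE eqxx mulr1 ffunE.
by rewrite RnM deltaE ne_c mulr0.
Qed.

Lemma scale_eigen n (M : lmodType (Rn n)) (v : M) (c : cube n) :
  (forall i, xvar i *: v = cst n (c i)%:R *: v) ->
  forall r : Rn n, r *: v = cst n (r c) *: v.
Proof.
move=> xv.
pose P (r : Rn n) := r *: v = cst n (r c) *: v.
have P1 : P 1 by rewrite /P ffunE cst1 scale1r.
have P0 : P 0 by rewrite /P ffunE cst0 !scale0r.
have PD r s : P r -> P s -> P (r + s).
  by rewrite /P scalerDl => -> ->; rewrite ffunE cstD scalerDl.
have PN r : P r -> P (- r) by rewrite /P scaleNr => ->; rewrite ffunE cstN scaleNr.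
have PM r s : P r -> P s -> P (r * s).
  rewrite /P -scalerA => Pr ->.
  by rewrite scale_cstC Pr scale_cstA RnM mulrC.
have Px i : P (xvar i) by rewrite /P xv xvarE.
have Pcst a : P (cst n a) by rewrite /P ffunE.
have Pdelta c' : P (delta c').
  by apply: (big_ind P P1 PM) => i _; case: (c' i); last apply/PD/PN.
move=> r; rewrite [r]Rn_delta_expansion.
by apply: (big_ind P P0 PD) => c' _; exact: PM (Pcst _) (Pdelta c').
Qed.

Lemma F2_basis_coord_inj n (M : lmodType (Rn n)) d (rho : 'I_d -> M)
    (a b : {ffun 'I_d -> 'F_2}) :
  F2_basis rho ->
  \sum_(j < d) cst n (a j) *: rho j = \sum_(j < d) cst n (b j) *: rho j ->
  a = b.
Proof.
move=> basis eq_ab; have [a' [_ uniq_a']] := basis (\sum_j cst n (a j) *: rho j).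
by rewrite -(uniq_a' a) // -(uniq_a' b).
Qed.

Section CodeOfBasis.

Variables (n : nat) (M : lmodType (Rn n)) (d : nat) (rho : 'I_d -> M).
Hypothesis basis : F2_basis rho.
Hypothesis xvar_rho :
  forall i j, xvar i *: rho j = rho j \/ xvar i *: rho j = 0.
Hypothesis separating : forall j k : 'I_d, j != k ->
  exists i : 'I_n, (xvar i *: rho j == 0) (+) (xvar i *: rho k == 0).

Definition code_of_basis (j : 'I_d) : cube n :=
  [ffun i => xvar i *: rho j != 0].

Lemma scale_rho r j : r *: rho j = cst n (r (code_of_basis j)) *: rho j.
Proof.
apply: scale_eigen => i; rewrite ffunE.
by case: (xvar_rho i j) => ->; rewrite ?eqxx /= ?cst0 ?scale0r //;
  case: eqP => [->|_]; rewrite ?scaler0 //= cst1 scale1r.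
Qed.

Lemma code_of_basis_inj : injective code_of_basis.
Proof.
move=> j k eq_jk; apply/eqP; apply: contraT => /separating [i].
have := congr1 (fun c : cube n => c i) eq_jk.
by rewrite !ffunE => /negb_inj ->; rewrite addbb.
Qed.

Definition basis_code : {set cube n} := [set code_of_basis j | j : 'I_d].

Lemma code_of_basis_in j : code_of_basis j \in basis_code.
Proof. exact: imset_f. Qed.

Let word j : {c : cube n | c \in basis_code} :=
  exist (fun c => c \in basis_code) _ (code_of_basis_in j).

Lemma word_surj (s : {c : cube n | c \in basis_code}) : exists j, s = word j.
Proof. by case: s => c /[dup] /imsetP [j _ ->] Cc; exists j; apply: val_inj. Qed.

Definition basis_comb (f : neural_ring basis_code) : M :=
  \sum_(j < d) cst n (f (word j)) *: rho j.

Lemma basis_combD f g : basis_comb (f + g) = basis_comb f + basis_comb g.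
Proof.
by rewrite -big_split; apply: eq_bigr => j _; rewrite ffunE cstD scalerDl.
Qed.

Lemma basis_comb_act r f : basis_comb (nr_act r f) = r *: basis_comb f.
Proof.
rewrite scaler_sumr; apply: eq_bigr => j _.
by rewrite scale_cstC (scale_rho r) scale_cstA ffunE mulrC.
Qed.

Lemma basis_comb_inj : injective basis_comb.
Proof.
move=> f g eq_fg; apply/ffunP => s; have [j ->] := word_surj s.
have eq_coord : [ffun j => f (word j)] = [ffun j => g (word j)].
  apply: (F2_basis_coord_inj basis).
  by under eq_bigr do rewrite ffunE; under [RHS]eq_bigr do rewrite ffunE.
by move/ffunP/(_ j): eq_coord; rewrite !ffunE.
Qed.

Lemma basis_comb_surj m : exists f, basis_comb f = m.
Proof.
have [a [-> _]] := basis m.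
exists [ffun s => \sum_(j | code_of_basis j == val s) a j].
apply: eq_bigr => j _; rewrite ffunE /=.
rewrite (eq_bigl (pred1 j)) ?big_pred1_eq // => k.
by rewrite (inj_eq code_of_basis_inj).
Qed.

Lemma iso_of_basis : iso_to_neural_ring M basis_code.
Proof.
pose phi m := odflt 0 [pick f | basis_comb f == m].
have phiK : cancel phi basis_comb.
  move=> m; rewrite /phi; case: pickP => [f /eqP //|none].
  by have [f eq_f] := basis_comb_surj m; move: (none f); rewrite eq_f eqxx.
have combK : cancel basis_comb phi.
  by move=> f; apply: basis_comb_inj; rewrite phiK.
exists phi; split; first by exists basis_comb.
- by move=> u v; apply: basis_comb_inj; rewrite basis_combD !phiK.
- by move=> r u; apply: basis_comb_inj; rewrite basis_comb_act !phiK.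
Qed.

End CodeOfBasis.

Section IndicatorBasis.

Variables (n : nat) (C : {set cube n}).

Definition indicator (s : {c : cube n | c \in C}) : neural_ring C :=
  [ffun t => (t == s)%:R].

Definition indicator_basis (j : 'I_#|{: {c : cube n | c \in C}}|) :=
  indicator (enum_val j).

Lemma indicator_neq0 s : indicator s != 0.
Proof. by apply/eqP => /ffunP /(_ s); rewrite !ffunE eqxx. Qed.

Lemma nr_act_xvar_indicator i s :
  nr_act (xvar i) (indicator s) = if val s i then indicator s else 0.
Proof.
apply/ffunP => t; rewrite !ffunE.
have [->|ne_ts] := eqVneq t s.
  by case: (val s i); rewrite !ffunE ?eqxx ?mulr1 ?mul0r.
by rewrite mulr0; case: ifP; rewrite ?ffunE ?(negbTE ne_ts).
Qed.

Lemma sum_indicator_basis (a : {ffun 'I_#|{: {c : cube n | c \in C}}| -> 'F_2}) :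
  \sum_j nr_act (cst n (a j)) (indicator_basis j) = [ffun t => a (enum_rank t)].
Proof.
apply/ffunP => t; rewrite sum_ffunE ffunE (bigD1 (enum_rank t)) //= big1.
  by rewrite !ffunE enum_rankK eqxx mulr1 addr0.
move=> j ne_j; rewrite !ffunE; case: eqP => [eq_t|_]; last by rewrite mulr0.
by move: ne_j; rewrite eq_t enum_valK eqxx.
Qed.

End IndicatorBasis.

Section BasisOfIso.

Variables (n : nat) (M : lmodType (Rn n)) (C : {set cube n}).
Variables (phi : M -> neural_ring C) (psi : neural_ring C -> M).
Hypotheses (phiK : cancel phi psi) (psiK : cancel psi phi).
Hypothesis phiD : forall u v, phi (u + v) = phi u + phi v.
Hypothesis phiZ : forall r u, phi (r *: u) = nr_act r (phi u).

Lemma psi_additive : {morph psi : f g / f + g}.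
Proof. by move=> f g; apply: (can_inj phiK); rewrite phiD !psiK. Qed.

Lemma psi_act r f : psi (nr_act r f) = r *: psi f.
Proof. by apply: (can_inj phiK); rewrite phiZ !psiK. Qed.

Lemma psi0 : psi 0 = 0.
Proof. by apply/(addrI (psi 0)); rewrite -psi_additive !addr0. Qed.

Lemma psi_sum d (F : 'I_d -> neural_ring C) : psi (\sum_j F j) = \sum_j psi (F j).
Proof. exact: (big_morph psi psi_additive psi0). Qed.

Let rho j := psi (@indicator_basis n C j).

Lemma F2_basis_of_iso : F2_basis rho.
Proof.
have combE (a : {ffun 'I_#|{: {c : cube n | c \in C}}| -> 'F_2}) :
    \sum_j cst n (a j) *: rho j = psi [ffun t => a (enum_rank t)].
  by rewrite -sum_indicator_basis psi_sum; under [RHS]eq_bigr do rewrite psi_act.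
move=> m; exists [ffun j => phi m (enum_val j)]; split.
  rewrite combE -[LHS]phiK; congr psi.
  by apply/ffunP => t; rewrite !ffunE enum_rankK.
move=> a; rewrite combE => ->; rewrite psiK.
by apply/ffunP => j; rewrite !ffunE enum_valK.
Qed.

Lemma xvar_scale_rho i j : xvar i *: rho j = rho j \/ xvar i *: rho j = 0.
Proof.
rewrite /rho -psi_act nr_act_xvar_indicator.
by case: ifP; [left | right; rewrite psi0].
Qed.

Lemma xvar_scale_rho_eq0 i j : (xvar i *: rho j == 0) = ~~ val (enum_val j) i.
Proof.
rewrite /rho -psi_act nr_act_xvar_indicator.
case: (val (enum_val j) i); last by rewrite psi0 eqxx.
apply/negbTE; apply: contraNN (indicator_neq0 (enum_val j)) => /eqP.
by move=> /(congr1 phi); rewrite psiK => ->; rewrite -psi0 psiK.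
Qed.

Lemma rho_separating j k : j != k ->
  exists i, (xvar i *: rho j == 0) (+) (xvar i *: rho k == 0).
Proof.
move=> ne_jk; have /cube_neqP [i ne_i] : val (enum_val j) != val (enum_val k).
  by rewrite (inj_eq val_inj) (inj_eq enum_val_inj).
exists i; move: ne_i; rewrite !xvar_scale_rho_eq0.
by case: (val (enum_val j) i); case: (val (enum_val k) i).
Qed.

Lemma basis_of_iso : exists (d : nat) (rho : 'I_d -> M),
  [/\ F2_basis rho,
      (forall i j, xvar i *: rho j = rho j \/ xvar i *: rho j = 0) &
      (forall j k, j != k ->
         exists i, (xvar i *: rho j == 0) (+) (xvar i *: rho k == 0))].
Proof.
exists _, rho; split.
- exact: F2_basis_of_iso.
- exact: xvar_scale_rho.
- exact: rho_separating.
Qed.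

End BasisOfIso.

Theorem theorem2 (n : nat) (hn : (1 <= n)%N) (M : lmodType (Rn n)) :
  (exists C : {set cube n}, iso_to_neural_ring M C) <->
  (exists (d : nat) (rho : 'I_d -> M),
     [/\ F2_basis rho,
         (forall (i : 'I_n) (j : 'I_d),
            xvar i *: rho j = rho j \/ xvar i *: rho j = 0) &
         (forall j k : 'I_d, j != k ->
            exists i : 'I_n,
              (xvar i *: rho j == 0) (+) (xvar i *: rho k == 0))]).
Proof.
split=> [[C [phi [[psi phiK psiK] phiD phiZ]]]|].
  exact: basis_of_iso phiK psiK phiD phiZ.
move=> [d [rho [basis xvar_rho separating]]].
by exists (basis_code rho); apply: iso_of_basis.
Qed.
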